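(* Part 1. Each preorder $(B,\le)$ yields a fibrous preorder $E(B,\le)=(R,B,B,1_B,\partial)$, with $xRy\iff x\le y$ and $\partial(x,y)=y$. Each monotone map $f\colon(B,\le)\to(B',\le')$ yields a fibrous morphism $E(f)=(f,f^* )$ with $f^*(f(b),b)=b$. This defines an embedding of the category of preorders and monotone maps into the category of fibrous preorders and fibrous morphisms. Part 2. A fibrous preorder $(R,A,B,p,\partial)$ is equivalent to one of the form $E(B,\le)$ if and only if there exists a map $u\colon B\to A$ with $pu=1_B$ such that $up(a)Ry\Rightarrow aRy$ for all $a\in A$ and $y\in B$. Part 3. In that case, define $xR^\circ y\iff u(x)Ry$ for $x,y\in B$. Then $R^\circ$ is a preorder (reflexive and transitive) on $B$, and $(R,A,B,p,\partial)$ is equivalent to $E(B,R^\circ)$.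
   Context: A fibrous preorder is a sequence $R\xrightarrow{\partial}A\xrightarrow{p}B$ consisting of the following data: - sets $A$ and $B$; - a map $p\colon A\to B$; - a relation $R\subseteq A\times B$ (write $aRb$ for $(a,b)\in R$); - a map $\partial\colon R\to A$. These must satisfy, for all $a\in A$ and $b,y\in B$ with $aRb$: - (F1) $p\partial(a,b)=b$; - (F2) $aRp(a)$ (this holds for all $a\in A$); - (F3) $\partial(a,b)Ry\Rightarrow aRy$. Given fibrous preorders $\mathbf{A}=(R,A,B,p,\partial)$ and $\mathbf{A}'=(R',A',B',p',\partial')$, a fibrous morphism $\mathbf{A}\to\mathbf{A}'$ is a pair $(f,f^* )$ with $f\colon B\to B'$ a map and $f^*\colon A'_f\to A$ a map, where $A'_f=\{(a',b)\in A'\times B\mid p'(a')=f(b)\}$. These must satisfy, for all $(a',b)\in A'_f$ and $y\in B$: - $pf^*(a',b)=b$; - $f^*(a',b)Ry\Rightarrow a'R'f(y)$. Composition is $(g,g^* )\circ(f,f^* )=(gf,h)$ with $h(a'',b)=f^*(g^*(a'',f(b)),b)$. Two fibrous preorders $(R,A,B,p,\partial)$ and $(R',A',B',p',\partial')$ are equivalent if $B=B'$ and there exist maps $\varphi\colon A\to A'$ and $\gamma\colon A'\to A$ with $p'\varphi=p$ and $p\gamma=p'$ such that, for all $a\in A$, $a'\in A'$ and $b\in B$, $\varphi(a)R'b\Rightarrow aRb$ and $\gamma(a')Rb\Rightarrow a'R'b$. *)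

Set Implicit Arguments.

(* Data of a fibrous preorder  R --d--> A --p--> B.
   The relation R ⊆ A×B is a Prop-valued relation; the map d : R -> A
   takes a pair (a,b) together with a witness of aRb. *)
Definition is_fibrous (A B : Type) (p : A -> B) (R : A -> B -> Prop)
  (d : forall a b, R a b -> A) : Prop :=
  (forall a b (h : R a b), p (d a b h) = b) /\
  (forall a, R a (p a)) /\
  (forall a b y (h : R a b), R (d a b h) y -> R a y).

(* Fibrous morphism (f, fs) : (R,A,B,p,d) -> (R',A',B',p',d').
   fs is defined on A'_f = {(a',b) | p'(a') = f(b)}. *)
Definition is_fmorph (A B : Type) (p : A -> B) (R : A -> B -> Prop)
  (A' B' : Type) (p' : A' -> B') (R' : A' -> B' -> Prop)
  (f : B -> B') (fs : forall (a' : A') (b : B), p' a' = f b -> A) : Prop :=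
  forall a' b (h : p' a' = f b),
    p (fs a' b h) = b /\ (forall y, R (fs a' b h) y -> R' a' (f y)).

Definition fid_map (B : Type) : B -> B := fun b => b.
Definition fid_star (A B : Type) (p : A -> B) :
  forall (a : A) (b : B), p a = fid_map b -> A := fun a _ _ => a.

(* Composition (g,gs) ∘ (f,fs) = (g∘f, h) with
   h(a'',b) = fs (gs (a'', f b), b).  Typing this requires the first
   morphism axiom of (g,gs), passed as argument Hg. *)
Definition fcomp_map (B B' B'' : Type) (g : B' -> B'') (f : B -> B') : B -> B'' :=
  fun b => g (f b).
Definition fcomp_star (A A' A'' B B' B'' : Type)
  (p' : A' -> B') (p'' : A'' -> B'')
  (f : B -> B') (fs : forall (a' : A') (b : B), p' a' = f b -> A)
  (g : B' -> B'') (gs : forall (a'' : A'') (b' : B'), p'' a'' = g b' -> A')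
  (Hg : forall a'' b' (h : p'' a'' = g b'), p' (gs a'' b' h) = b') :
  forall (a'' : A'') (b : B), p'' a'' = fcomp_map g f b -> A :=
  fun a'' b h => fs (gs a'' (f b) h) b (Hg a'' (f b) h).

Definition fmorph_eq (A B A' B' : Type) (p' : A' -> B')
  (f : B -> B') (fs : forall (a' : A') (b : B), p' a' = f b -> A)
  (g : B -> B') (gs : forall (a' : A') (b : B), p' a' = g b -> A) : Prop :=
  (forall b, f b = g b) /\
  (forall a' b (h1 : p' a' = f b) (h2 : p' a' = g b), fs a' b h1 = gs a' b h2).

Definition preorder (B : Type) (le : B -> B -> Prop) : Prop :=
  (forall x, le x x) /\ (forall x y z, le x y -> le y z -> le x z).

Definition monotone (B B' : Type) (le : B -> B -> Prop) (le' : B' -> B' -> Prop)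
  (f : B -> B') : Prop := forall x y, le x y -> le' (f x) (f y).

Definition E_p (B : Type) : B -> B := fun x => x.
Definition E_R (B : Type) (le : B -> B -> Prop) : B -> B -> Prop := le.
Definition E_d (B : Type) (le : B -> B -> Prop) :
  forall x y, E_R le x y -> B := fun _ y _ => y.

Definition E_star (B B' : Type) (f : B -> B') :
  forall (a' : B') (b : B), E_p a' = f b -> B := fun _ b _ => b.

(* First morphism axiom for E(g), needed to compose with E(g). *)
Lemma E_star_p (B' B'' : Type) (g : B' -> B'') :
  forall a'' b' (h : E_p a'' = g b'), @E_p B' (@E_star B' B'' g a'' b' h) = b'.
Proof. reflexivity. Qed.

Definition fequiv (A A' B : Type) (p : A -> B) (R : A -> B -> Prop)
  (p' : A' -> B) (R' : A' -> B -> Prop) : Prop :=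
  exists (phi : A -> A') (gam : A' -> A),
    (forall a, p' (phi a) = p a) /\ (forall a', p (gam a') = p' a') /\
    (forall a b, R' (phi a) b -> R a b) /\
    (forall a' b, R (gam a') b -> R' a' b).


Set Implicit Arguments.

(* Part 1 is a direct unfolding: a preorder (B,<=) satisfies the axioms
   F1-F3 for E(B,<=) (F2 is reflexivity, F3 is transitivity), a monotone
   map f gives the fibrous morphism (f, (f b, b) |-> b), E preserves
   identities and composites, and E is faithful because the base map of
   E(f) is f itself.

   Parts 2 and 3 rest on two observations about a fibrous preorder
   (R,A,B,p,d) with a section u of p such that up(a) R y implies a R y:
   - the relation x R° y := u(x) R y is a preorder on B (reflexivity from
     F2, transitivity from F3 and F1 together with the property of u), and
   - (p, u) is an equivalence between (R,A,B,p,d) and E(B,R°).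
   Conversely, if (phi, gam) is an equivalence with some E(B,<=), then gam
   is a section of p with the required property. *)

Lemma E_is_fibrous (B : Type) (le : B -> B -> Prop) :
  preorder le -> is_fibrous (@E_p B) (E_R le) (E_d le).
Proof.
  intros [le_refl le_trans]. repeat split.
  - intro x. apply le_refl.
  - intros x y z Hxy Hyz. exact (le_trans _ _ _ Hxy Hyz).
Qed.

Lemma E_star_is_fmorph (B B' : Type) (le : B -> B -> Prop)
  (le' : B' -> B' -> Prop) (f : B -> B') :
  monotone le le' f ->
  is_fmorph (@E_p B) (E_R le) (@E_p B') (E_R le') f (E_star f).
Proof.
  intros f_mono a' b Ha'. split; [reflexivity|].
  intros y Hby. unfold E_p in Ha'. unfold E_R. rewrite Ha'. exact (f_mono _ _ Hby).
Qed.

Lemma E_preserves_id (B : Type) :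
  fmorph_eq (@E_p B) (@fid_map B) (E_star (@fid_map B))
            (@fid_map B) (fid_star (@E_p B)).
Proof.
  split; [reflexivity|]. intros a' b Hb1 Hb2. exact (eq_sym Hb1).
Qed.

Lemma E_preserves_comp (B B' B'' : Type) (f : B -> B') (g : B' -> B'') :
  fmorph_eq (@E_p B'') (fcomp_map g f) (E_star (fcomp_map g f))
            (fcomp_map g f)
            (fcomp_star (@E_p B') (@E_p B'') f (E_star f) g (E_star g)
                        (E_star_p g)).
Proof. split; reflexivity. Qed.

Lemma E_faithful (B B' : Type) (f g : B -> B') :
  fmorph_eq (@E_p B') f (E_star f) g (E_star g) -> forall b, f b = g b.
Proof. intros [Hfg _]. exact Hfg. Qed.

Section SectionOfFibrousPreorder.

Variables (A B : Type) (p : A -> B) (R : A -> B -> Prop).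

Definition good_section (u : B -> A) : Prop :=
  (forall b, p (u b) = b) /\ (forall a y, R (u (p a)) y -> R a y).

Lemma good_section_of_fequiv (le : B -> B -> Prop) :
  fequiv p R (@E_p B) (E_R le) -> exists u, good_section u.
Proof.
  intros [phi [gam [phi_p [gam_p [phi_refl gam_refl]]]]].
  exists gam. split; [exact gam_p|].
  intros a y Hy. apply phi_refl. apply gam_refl in Hy.
  unfold E_R, E_p in *. rewrite phi_p. exact Hy.
Qed.

Variables (d : forall a b, R a b -> A) (u : B -> A).
Hypothesis R_fibrous : is_fibrous p R d.
Hypothesis u_good : good_section u.

Definition induced_rel : B -> B -> Prop := fun x y => R (u x) y.

Lemma induced_rel_preorder : preorder induced_rel.
Proof.
  destruct R_fibrous as [F1 [F2 F3]]. destruct u_good as [u_sect u_refl].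
  unfold induced_rel. split.
  - intro x. pose proof (F2 (u x)) as Hx. rewrite u_sect in Hx. exact Hx.
  - intros x y z Hxy Hyz. apply (F3 _ _ _ Hxy). apply u_refl. rewrite F1. exact Hyz.
Qed.

Lemma fequiv_induced : fequiv p R (@E_p B) (E_R induced_rel).
Proof.
  destruct u_good as [u_sect u_refl].
  exists p, u. unfold E_p, E_R, induced_rel. repeat split; auto.
Qed.

End SectionOfFibrousPreorder.

Theorem mainTheorem4 :
  (* Part 1: E is an embedding of preorders into fibrous preorders *)
  ((forall (B : Type) (le : B -> B -> Prop),
      preorder le -> is_fibrous (@E_p B) (E_R le) (E_d le)) /\
   (forall (B B' : Type) (le : B -> B -> Prop) (le' : B' -> B' -> Prop) (f : B -> B'),
      preorder le -> preorder le' -> monotone le le' f ->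
      is_fmorph (@E_p B) (E_R le) (@E_p B') (E_R le') f (E_star f)) /\
   (forall (B : Type),
      fmorph_eq (@E_p B) (@fid_map B) (E_star (@fid_map B))
                (@fid_map B) (fid_star (@E_p B))) /\
   (forall (B B' B'' : Type) (f : B -> B') (g : B' -> B''),
      fmorph_eq (@E_p B'') (fcomp_map g f) (E_star (fcomp_map g f))
                (fcomp_map g f)
                (fcomp_star (@E_p B') (@E_p B'') f (E_star f) g (E_star g)
                            (E_star_p g))) /\
   (forall (B B' : Type) (f g : B -> B'),
      fmorph_eq (@E_p B') f (E_star f) g (E_star g) -> forall b, f b = g b))
  /\
  (* Part 2 *)
  (forall (A B : Type) (p : A -> B) (R : A -> B -> Prop) (d : forall a b, R a b -> A),
     is_fibrous p R d ->
     ((exists le : B -> B -> Prop, preorder le /\ fequiv p R (@E_p B) (E_R le)) <->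
      (exists u : B -> A, (forall b, p (u b) = b) /\
                          (forall a y, R (u (p a)) y -> R a y))))
  /\
  (* Part 3 *)
  (forall (A B : Type) (p : A -> B) (R : A -> B -> Prop) (d : forall a b, R a b -> A)
          (u : B -> A),
     is_fibrous p R d ->
     (forall b, p (u b) = b) ->
     (forall a y, R (u (p a)) y -> R a y) ->
     let Ro := fun x y => R (u x) y in
     preorder Ro /\ fequiv p R (@E_p B) (E_R Ro)).
Proof.
  split; [|split].
  - split; [exact E_is_fibrous|].
    split; [intros B B' le le' f _ _; apply E_star_is_fmorph|].
    split; [exact E_preserves_id|].
    split; [exact E_preserves_comp | exact E_faithful].
  - intros A B p R d R_fibrous. split.
    + intros [le [_ Hequiv]]. exact (good_section_of_fequiv Hequiv).
    + intros [u u_good]. exists (induced_rel R u).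
      split; [exact (induced_rel_preorder R_fibrous u_good)
             | exact (fequiv_induced u_good)].
  - intros A B p R d u R_fibrous u_sect u_refl.
    assert (u_good : good_section p R u) by (split; assumption).
    split; [exact (induced_rel_preorder R_fibrous u_good)
           | exact (fequiv_induced u_good)].
Qed.
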